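(* Let $d\ge 2$ and $n\ge1$, and let $H$ be a Latin hypercube of dimension $d-1$ and order $n$ (equivalently $H=\mathcal H(P)$ for some $1$-permutation matrix $P\in\Lambda_1(d,n)$). Let $T=\{\alpha_1,\dots,\alpha_n\}$ be a transversal of $H$. Then \[\sum_{i=1}^n \Delta(\alpha_i)\equiv\begin{cases} 0 \pmod n&\text{if } n \text{ is odd or } d \text{ is even,}\\ n/2 \pmod n&\text{otherwise}.\end{cases}\]
   Context: Let $I_n=\{1,\dots,n\}$. A Latin hypercube of dimension $m$ and order $n$ is a function $H:I_n^m\to I_n$ such that along every line (varying one coordinate while fixing the others) each symbol of $I_n$ appears exactly once. A $1$-permutation matrix $P\in\Lambda_1(d,n)$ is a $(0,1)$-valued function on $I_n^d$ with exactly one $1$ in each line; it corresponds to the Latin hypercube $\mathcal H(P)$ of dimension $d-1$ with $\mathcal H(P)(i_1,\dots,i_{d-1})=i_d$ iff $P(i_1,\dots,i_d)=1$. A transversal of a Latin hypercube $H$ of dimension $m$ and order $n$ is a selection of $n$ cells of $H$, any two of which differ in every coordinate and contain different symbols. For a cell $\alpha$ at position $(i_1,\dots,i_m)$ of $H$ containing symbol $e=H(i_1,\dots,i_m)$, the Delta function is $\Delta(\alpha)\equiv e-i_1-\cdots-i_m \pmod n$. *)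

From mathcomp Require Import all_boot all_order all_algebra.
Set Implicit Arguments. Unset Strict Implicit. Unset Printing Implicit Defensive.
Import GRing.Theory Num.Theory.

(* Cells of a hypercube of dimension m and order n: functions 'I_m -> 'I_n.
   Coordinates/symbols are stored 0-based: the value i : 'I_n stands for i+1 in I_n. *)
Definition cell (m n : nat) := {ffun 'I_m -> 'I_n}.

Definition upd (m n : nat) (x : cell m n) (k : 'I_m) (v : 'I_n) : cell m n :=
  [ffun j => if j == k then v else x j].

Definition latin_hypercube (m n : nat) (H : cell m n -> 'I_n) : Prop :=
  forall (x : cell m n) (k : 'I_m) (s : 'I_n),
    #|[set v : 'I_n | H (upd x k v) == s]| = 1.

Definition hc_transversal (m n : nat) (H : cell m n -> 'I_n) (T : {set cell m n}) : Prop :=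
  #|T| = n /\
  forall a b, a \in T -> b \in T -> a != b ->
    (forall k : 'I_m, a k != b k) /\ H a != H b.

Definition Delta (m n : nat) (H : cell m n -> 'I_n) (a : cell m n) : int :=
  ((((H a).+1 : int) - \sum_(k < m) ((a k).+1 : int))%R %% (n : int))%Z.

(* A transversal meets every symbol, and every value of each of the d - 1
   coordinates, exactly once, so the sum of the Deltas is congruent modulo n
   to (2 - d) * n(n+1)/2.  If n is odd, n divides n(n+1)/2; if d is even, the
   product is n * (n+1) * (2-d)/2; otherwise n(n+1)/2 = n/2 (mod n) and it is
   multiplied by the odd number 2 - d. *)

From mathcomp Require Import all_boot all_order all_algebra.
From mathcomp Require Import ring zify.
Import GRing.Theory Num.Theory.
Local Open Scope ring_scope.

Lemma sum_inj_ord {V : nmodType} {I : finType} {A : {set I}} {n : nat}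
    {f : I -> 'I_n} (F : 'I_n -> V) :
  #|A| = n -> {in A &, injective f} -> \sum_(a in A) F (f a) = \sum_(i < n) F i.
Proof.
move=> cardA injf; rewrite -(big_imset F injf) /=.
have -> : f @: A = setT.
  by apply/eqP; rewrite eqEcard subsetT cardsT card_ord card_in_imset // cardA leqnn.
by apply: eq_bigl => i; rewrite in_setT.
Qed.

Lemma sum_ord_succ (n : nat) : \sum_(i < n) (i.+1 : int) = 'C(n.+1, 2).
Proof.
rewrite -bin2_sum big_mkord big_ord_recl /= add0n -natz natr_sum.
by apply: eq_bigr => i _; rewrite natz.
Qed.

Lemma modz_sum (I : finType) (A : pred I) (x : I -> int) (n : int) :
  ((\sum_(a in A) (x a %% n)%Z) %% n)%Z = ((\sum_(a in A) x a) %% n)%Z.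
Proof.
apply: (big_rec2 (fun y1 y2 => (y1 %% n)%Z = (y2 %% n)%Z)) => // a y1 y2 _ IH.
by rewrite modzDml -modzDmr IH modzDmr.
Qed.

Section Transversal.

Variables (m n : nat) (H : cell m n -> 'I_n) (T : {set cell m n}).
Hypothesis hT : hc_transversal H T.

Lemma transversal_inj_coord (k : 'I_m) :
  {in T &, injective (fun a : cell m n => a k)}.
Proof.
case: hT => _ separated a b aT bT eq_ab.
apply/eqP/negPn/negP => /(separated a b aT bT).
by case=> /(_ k); rewrite eq_ab eqxx.
Qed.

Lemma transversal_inj_symbol : {in T &, injective H}.
Proof.
case: hT => _ separated a b aT bT eq_ab.
apply/eqP/negPn/negP => /(separated a b aT bT).
by case=> _; rewrite eq_ab eqxx.
Qed.

Lemma transversal_sum_Delta :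
  ((\sum_(a in T) Delta H a) %% n)%Z =
  ((('C(n.+1, 2) : int) * (1 - m%:Z)) %% n)%Z.
Proof.
have cardT : #|T| = n by case: hT.
rewrite /Delta modz_sum sumrB exchange_big /=.
rewrite (sum_inj_ord (fun i => (i.+1 : int)) cardT transversal_inj_symbol).
under eq_bigr => k _ do
  rewrite (sum_inj_ord (fun i => (i.+1 : int)) cardT (transversal_inj_coord k)).
by rewrite sumr_const card_ord sum_ord_succ -mulr_natr natz mulrBr mulr1.
Qed.

End Transversal.

Lemma modz_bin2 (n : nat) :
  (('C(n.+1, 2) : int) %% n)%Z = if odd n then 0 else n./2%:Z.
Proof.
have e := odd_double_half n; set k := n./2 in e *.
rewrite bin2 /=; case: (odd n) e => /= e.
- have -> : ((n.+1 * n)./2 : int) = (k.+1 : int) * n.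
    by apply/eqP; rewrite eqz_nat -e; apply/eqP; lia.
  by rewrite modzMl.
- have -> : ((n.+1 * n)./2 : int) = (k : int) * n + k.
    by rewrite -PoszM -PoszD; apply/eqP; rewrite eqz_nat -e; apply/eqP; lia.
  rewrite modzMDl; case: k e => [|k] e; first by rewrite mod0z.
  by rewrite modz_small //= ltz_nat -e; lia.
Qed.

Lemma modz_bin2_mul (n m : nat) :
  ((('C(n.+1, 2) : int) * (1 - m%:Z)) %% n)%Z =
  if odd n || odd m then 0 else n./2%:Z.
Proof.
rewrite -modzMml modz_bin2; case: (boolP (odd n)) => /= [_|even_n].
  by rewrite mul0r mod0z.
have en := odd_double_half n; rewrite (negbTE even_n) add0n in en.
have := odd_double_half m; move: (odd m) => b em.
set k := n./2 in en *; set j := m./2 in em.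
have -> : (k : int) * (1 - m%:Z) = - (j : int) * n + (k : int) * (1 - (b : int)).
  by rewrite -em -en -!muln2 !PoszD !PoszM; ring.
rewrite modzMDl; case: b {em} => /=; first by rewrite subrr mulr0 mod0z.
rewrite subr0 mulr1; case: k en => [|k] en; first by rewrite mod0z.
by rewrite modz_small //= ltz_nat -en; lia.
Qed.

Local Close Scope ring_scope.

Theorem lemma2p4 (d n : nat) (hd : 2 <= d) (hn : 1 <= n)
  (H : cell d.-1 n -> 'I_n) (hH : latin_hypercube H)
  (T : {set cell d.-1 n}) (hT : hc_transversal H T) :
  ((\sum_(a in T) Delta H a)%R %% (n : int))%Z =
  (if odd n || ~~ odd d then 0%Z else ((n./2)%N : int)).
Proof.
have -> : ~~ odd d = odd d.-1 by rewrite -{1}(prednK (ltnW hd)) /= negbK.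
by rewrite transversal_sum_Delta // modz_bin2_mul.
Qed.
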